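(* Let $m\in\mathbb Z$. For all $N\ge1$ and all $z=x+iy$ with $-\pi/10\le x\le2\pi$ and $y=8\pi/5$, $$\frac{e^{z/N}}{2\pi i\,(e^{z/N}-1)^{m+1}(e^{z/N})_N}=O(N^{m+1}),$$ with implied constant depending only on $m$.
   Context: $(q)_N:=(1-q)(1-q^2)\cdots(1-q^N)$. *)

From Stdlib Require Import Reals ZArith.
Open Scope R_scope.

Definition C : Type := (R * R)%type.
Definition RtoC (a : R) : C := (a, 0).
Definition Ci : C := (0, 1).
Definition Cadd (z w : C) : C := (fst z + fst w, snd z + snd w).
Definition Csub (z w : C) : C := (fst z - fst w, snd z - snd w).
Definition Cmul (z w : C) : C :=
  (fst z * fst w - snd z * snd w, fst z * snd w + snd z * fst w).
Definition Cnorm2 (z : C) : R := fst z * fst z + snd z * snd z.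
(* inverse; (0,0) maps to (0,0) as Rinv 0 is unspecified-but-total *)
Definition Cinv (z : C) : C := (fst z / Cnorm2 z, - snd z / Cnorm2 z).
Definition Cdiv (z w : C) : C := Cmul z (Cinv w).
Definition Cnorm (z : C) : R := sqrt (Cnorm2 z).
Definition Cexp (z : C) : C := (exp (fst z) * cos (snd z), exp (fst z) * sin (snd z)).
Fixpoint Cpow (z : C) (n : nat) : C :=
  match n with O => RtoC 1 | S n => Cmul z (Cpow z n) end.
Definition CpowZ (z : C) (k : Z) : C :=
  match k with
  | Z0 => RtoC 1
  | Zpos p => Cpow z (Pos.to_nat p)
  | Zneg p => Cinv (Cpow z (Pos.to_nat p))
  end.
Fixpoint qpoch (q : C) (N : nat) : C :=
  match N with
  | O => RtoC 1
  | S n => Cmul (qpoch q n) (Csub (RtoC 1) (Cpow q (S n)))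
  end.

Definition corF (m : Z) (N : nat) (z : C) : C :=
  let q := Cexp (Cdiv z (RtoC (INR N))) in
  Cdiv q (Cmul (Cmul (Cmul (RtoC (2 * PI)) Ci) (CpowZ (Csub q (RtoC 1)) (m + 1)))
               (qpoch q N)).

From Stdlib Require Import Reals ZArith Lra Lia Psatz List.
Import ListNotations.
Open Scope R_scope.

(* Write q = e^{z/N}. Since |q| = e^{x/N} <= e^{2π} and |q - 1| is of exact order 1/N, the
   claim reduces to a lower bound for |(q)_N| that is uniform in N and x.  The factor
   |1 - q^k| depends on |q^k| = e^{kx/N} >= e^{-π/10} and on the angle 8πk/(5N), which runs
   through (0, 32·π/20].  Group the k into 32 blocks according to the arc of width π/20 that
   contains the angle; every block has ⌊N/32⌋ or ⌊N/32⌋ + 1 members.  On the first arc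
   |1 - q^k| >= sin(angle) >= 5k/N, and a Stirling-type bound makes the block product at
   least ((5/96)^⌊N/32⌋ / 3)^2.  On every other arc a tabulated upper bound for the cosine
   bounds |1 - q^k|^2 below by a constant c_j, and since (5/96)^2 c_2 ⋯ c_32 >= 1 the
   ⌊N/32⌋-th powers do not decay. *)

(** * Complex moduli *)

Lemma Cnorm2_Cmul z w : Cnorm2 (Cmul z w) = Cnorm2 z * Cnorm2 w.
Proof. destruct z, w; unfold Cnorm2, Cmul; cbn; ring. Qed.

Lemma Cnorm2_Cinv z : Cnorm2 (Cinv z) = / Cnorm2 z.
Proof.
  destruct z as [a b]; unfold Cinv, Cnorm2; cbn.
  destruct (Req_dec (a * a + b * b) 0) as [H0|H0].
  - unfold Rdiv; rewrite H0, Rinv_0; ring.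
  - field; exact H0.
Qed.

Lemma Cnorm2_Cdiv z w : Cnorm2 (Cdiv z w) = Cnorm2 z / Cnorm2 w.
Proof. unfold Cdiv; rewrite Cnorm2_Cmul, Cnorm2_Cinv; reflexivity. Qed.

Lemma Cnorm2_Cpow z n : Cnorm2 (Cpow z n) = Cnorm2 z ^ n.
Proof.
  induction n as [|n IH]; cbn [Cpow pow].
  - unfold Cnorm2, RtoC; cbn; ring.
  - rewrite Cnorm2_Cmul, IH; reflexivity.
Qed.

Lemma Cnorm2_CpowZ z e : Cnorm2 (CpowZ z e) = powerRZ (Cnorm2 z) e.
Proof.
  destruct e as [|p|p]; cbn [CpowZ powerRZ].
  - unfold Cnorm2, RtoC; cbn; ring.
  - apply Cnorm2_Cpow.
  - rewrite Cnorm2_Cinv, Cnorm2_Cpow; reflexivity.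
Qed.

Lemma Cnorm2_Csub_sym z w : Cnorm2 (Csub z w) = Cnorm2 (Csub w z).
Proof. destruct z, w; unfold Cnorm2, Csub; cbn; ring. Qed.

Lemma Cdiv_RtoC a b r : r <> 0 -> Cdiv (a, b) (RtoC r) = (a / r, b / r).
Proof. intros Hr; unfold Cdiv, Cmul, Cinv, Cnorm2, RtoC; cbn; f_equal; field; exact Hr. Qed.

Lemma Cmul_Cexp a b c d : Cmul (Cexp (a, b)) (Cexp (c, d)) = Cexp (a + c, b + d).
Proof. unfold Cmul, Cexp; cbn; rewrite exp_plus, cos_plus, sin_plus; f_equal; ring. Qed.

Lemma Cpow_Cexp a b n : Cpow (Cexp (a, b)) n = Cexp (INR n * a, INR n * b).
Proof.
  induction n as [|n IH]; cbn [Cpow].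
  - unfold Cexp, RtoC; cbn; rewrite !Rmult_0_l, exp_0, cos_0, sin_0; f_equal; ring.
  - rewrite IH, Cmul_Cexp, S_INR; f_equal; f_equal; ring.
Qed.

Lemma Cnorm2_Cexp a b : Cnorm2 (Cexp (a, b)) = exp a ^ 2.
Proof.
  unfold Cnorm2, Cexp; cbn.
  pose proof (sin2_cos2 b) as Hsc; unfold Rsqr in Hsc. nra.
Qed.

Definition norm2_1_sub_exp (a b : R) : R := 1 - 2 * exp a * cos b + exp a ^ 2.

Lemma Cnorm2_1_sub_Cexp a b : Cnorm2 (Csub (RtoC 1) (Cexp (a, b))) = norm2_1_sub_exp a b.
Proof.
  unfold Cnorm2, Csub, RtoC, Cexp, norm2_1_sub_exp; cbn.
  pose proof (sin2_cos2 b) as Hsc; unfold Rsqr in Hsc. nra.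
Qed.

Lemma norm2_1_sub_exp_sin a b : norm2_1_sub_exp a b = (exp a - cos b) ^ 2 + sin b ^ 2.
Proof.
  unfold norm2_1_sub_exp.
  pose proof (sin2_cos2 b) as Hsc; unfold Rsqr in Hsc. nra.
Qed.

Lemma norm2_1_sub_exp_cos a b :
  norm2_1_sub_exp a b = (1 - exp a) ^ 2 + 2 * exp a * (1 - cos b).
Proof. unfold norm2_1_sub_exp; ring. Qed.

Lemma norm2_1_sub_exp_ge0 a b : 0 <= norm2_1_sub_exp a b.
Proof.
  rewrite norm2_1_sub_exp_sin.
  pose proof (pow2_ge_0 (exp a - cos b)); pose proof (pow2_ge_0 (sin b)); lra.
Qed.

(** * Finite products *)

Fixpoint rprod (f : nat -> R) (n : nat) : R :=
  match n with O => 1 | S n => rprod f n * f (S n) end.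

Lemma rprod_ge0 f n : (forall k, (1 <= k <= n)%nat -> 0 <= f k) -> 0 <= rprod f n.
Proof.
  induction n as [|n IH]; intros Hf; cbn; [lra|].
  apply Rmult_le_pos; [apply IH; intros k Hk|]; apply Hf; lia.
Qed.

Lemma rprod_gt0 f n : (forall k, (1 <= k <= n)%nat -> 0 < f k) -> 0 < rprod f n.
Proof.
  induction n as [|n IH]; intros Hf; cbn; [lra|].
  apply Rmult_lt_0_compat; [apply IH; intros k Hk|]; apply Hf; lia.
Qed.

Lemma rprod_le f g n : (forall k, (1 <= k <= n)%nat -> 0 <= f k <= g k) ->
  rprod f n <= rprod g n.
Proof.
  induction n as [|n IH]; intros Hfg; cbn; [lra|].
  apply Rmult_le_compat.
  - apply rprod_ge0; intros k Hk; apply Hfg; lia.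
  - apply Hfg; lia.
  - apply IH; intros k Hk; apply Hfg; lia.
  - apply Hfg; lia.
Qed.

Lemma rprod_const c n : rprod (fun _ => c) n = c ^ n.
Proof. induction n as [|n IH]; cbn; [reflexivity|]; rewrite IH; ring. Qed.

Lemma rprod_mul f g n : rprod (fun k => f k * g k) n = rprod f n * rprod g n.
Proof. induction n as [|n IH]; cbn; [ring|]; rewrite IH; ring. Qed.

Lemma rprod_pow f p n : rprod (fun k => f k ^ p) n = rprod f n ^ p.
Proof.
  induction n as [|n IH]; cbn; [rewrite pow1; reflexivity|].
  rewrite IH, Rpow_mult_distr; reflexivity.
Qed.

Lemma rprod_add f m n : rprod f (m + n) = rprod f m * rprod (fun i => f (m + i)%nat) n.
Proof.
  induction n as [|n IH]; cbn.
  - rewrite Nat.add_0_r; ring.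
  - rewrite Nat.add_succ_r; cbn; rewrite IH; ring.
Qed.

Lemma rprod_INR_fact n : rprod INR n = INR (Factorial.fact n).
Proof.
  induction n as [|n IH]; cbn [rprod]; [reflexivity|].
  rewrite IH, fact_simpl, mult_INR; ring.
Qed.

Lemma rprod_blocks (f L : nat -> R) (b : nat -> nat) (J : nat) :
  b O = O -> (forall j, (b j <= b (S j))%nat) ->
  (forall j, (j < J)%nat -> 0 <= L (S j) <= rprod (fun i => f (b j + i)%nat) (b (S j) - b j)) ->
  rprod L J <= rprod f (b J).
Proof.
  intros Hb0 Hb HL. induction J as [|J IH]; cbn [rprod].
  - rewrite Hb0; cbn; lra.
  - replace (b (S J)) with (b J + (b (S J) - b J))%nat by (specialize (Hb J); lia).
    rewrite rprod_add.
    apply Rmult_le_compat.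
    + apply rprod_ge0; intros k Hk; replace k with (S (pred k)) by lia; apply HL; lia.
    + apply HL; lia.
    + apply IH; intros j Hj; apply HL; lia.
    + apply HL; lia.
Qed.

Lemma Cnorm2_qpoch_Cexp a b N :
  Cnorm2 (qpoch (Cexp (a, b)) N) = rprod (fun k => norm2_1_sub_exp (INR k * a) (INR k * b)) N.
Proof.
  induction N as [|N IH]; cbn [qpoch rprod].
  - unfold Cnorm2, RtoC; cbn; ring.
  - rewrite Cnorm2_Cmul, IH, Cpow_Cexp, Cnorm2_1_sub_Cexp; reflexivity.
Qed.

Lemma INR_fact_S n : INR (Factorial.fact (S n)) = INR (S n) * INR (Factorial.fact n).
Proof. rewrite fact_simpl, mult_INR; reflexivity. Qed.

Ltac expand_approx :=
  unfold cos_approx, sin_approx, cos_term, sin_term; cbn [sum_f_R0];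
  simpl Nat.mul; simpl Nat.add; repeat rewrite INR_fact_S; simpl INR; field.

Lemma cos_approx_1 a : cos_approx a 1 = 1 - a ^ 2 / 2.
Proof. expand_approx. Qed.

Lemma cos_approx_4 a : cos_approx a 4 = 1 - a^2/2 + a^4/24 - a^6/720 + a^8/40320.
Proof. expand_approx. Qed.

Lemma cos_approx_5 a :
  cos_approx a 5 = 1 - a^2/2 + a^4/24 - a^6/720 + a^8/40320 - a^10/3628800.
Proof. expand_approx. Qed.

Lemma sin_approx_1 a : sin_approx a 1 = a - a ^ 3 / 6.
Proof. expand_approx. Qed.

Lemma PI_gt_314 : 314 / 100 < PI.
Proof.
  enough (157 / 100 < PI / 2) by lra.
  apply PI2_lower_bound; [lra|].
  destruct (pre_cos_bound (157 / 100) 2) as [Hc _]; [lra|lra|].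
  rewrite cos_approx_5 in Hc; lra.
Qed.

Lemma PI_lt_32 : PI < 32 / 10.
Proof.
  destruct (Rlt_or_le PI (32 / 10)) as [H|H]; [exact H|exfalso].
  assert (Hc0 : 0 <= cos (16 / 10)) by (apply cos_ge_0; lra).
  destruct (pre_cos_bound (16 / 10) 1) as [_ Hc]; [lra|lra|].
  rewrite cos_approx_4 in Hc; lra.
Qed.

Lemma one_sub_cos_le b : 1 - cos b <= b ^ 2 / 2.
Proof.
  destruct (Rle_or_lt (b ^ 2) 4) as [Hb|Hb].
  - destruct (pre_cos_bound b 0) as [Hc _]; [nra|nra|].
    rewrite cos_approx_1 in Hc; lra.
  - pose proof (COS_bound b); lra.
Qed.

Lemma sin_small_arc_ge t : 0 <= t <= 1 / 32 -> 5 * t <= sin (8 * PI / 5 * t).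
Proof.
  intros Ht. pose proof PI_gt_314. pose proof PI_lt_32.
  set (v := 8 * PI / 5 * t).
  assert (Hv : 5024 / 1000 * t <= v <= 16 / 100) by (unfold v; nra).
  destruct (sin_bound v 0) as [Hs _]; [lra|lra|].
  rewrite sin_approx_1 in Hs.
  assert (v ^ 3 <= 256 / 10000 * v) by (cbn; nra).
  lra.
Qed.

Lemma exp_le_compat a b : a <= b -> exp a <= exp b.
Proof. intros [H|H]; [left; apply exp_increasing; exact H | subst; lra]. Qed.

Lemma exp_pow a n : exp a ^ n = exp (INR n * a).
Proof.
  induction n as [|n IH]; cbn [pow].
  - rewrite Rmult_0_l, exp_0; reflexivity.
  - rewrite IH, <- exp_plus, S_INR; f_equal; ring.
Qed.

Lemma exp_ge_7_10 s : - (32 / 100) <= s -> 7 / 10 <= exp s.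
Proof.
  intros Hs.
  assert (Hsq : exp (- (32 / 100)) = exp (- (16 / 100)) * exp (- (16 / 100))).
  { rewrite <- exp_plus; f_equal; lra. }
  pose proof (exp_ineq1_le (- (16 / 100))).
  pose proof (exp_le_compat _ _ Hs). nra.
Qed.

Lemma one_sub_exp_sq_le a M : a <= M -> 0 <= M -> (1 - exp a) ^ 2 <= exp M ^ 2 * a ^ 2.
Proof.
  intros HaM HM.
  pose proof (exp_le_compat _ _ HaM). pose proof (exp_pos a).
  pose proof (exp_ineq1_le a).
  assert (HM1 : 1 <= exp M) by (pose proof (exp_ineq1_le M); lra).
  destruct (Rle_or_lt 0 a) as [Ha|Ha].
  - assert (Hinv : exp a * exp (- a) = 1) by (rewrite <- exp_plus, Rplus_opp_r; apply exp_0).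
    pose proof (exp_ineq1_le (- a)).
    assert (0 <= exp a - 1 <= a * exp M) by nra.
    nra.
  - assert (exp a <= 1) by (rewrite <- exp_0; apply exp_le_compat; lra).
    assert (0 <= 1 - exp a <= - a * exp M) by nra.
    nra.
Qed.

Lemma norm2_1_sub_exp_le a b M : a <= M -> 0 <= M ->
  norm2_1_sub_exp a b <= exp M ^ 2 * a ^ 2 + exp M * b ^ 2.
Proof.
  intros HaM HM. rewrite norm2_1_sub_exp_cos.
  pose proof (one_sub_exp_sq_le a M HaM HM). pose proof (one_sub_cos_le b).
  pose proof (exp_le_compat _ _ HaM). pose proof (exp_pos a).
  pose proof (pow2_ge_0 b). pose proof (COS_bound b).
  nra.
Qed.

Lemma succ_pow_le_3_pow n : (INR n + 1) ^ n <= 3 * INR n ^ n.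
Proof.
  destruct n as [|n]; [cbn; lra|].
  assert (Hr : 0 < INR (S n)) by (apply lt_0_INR; lia).
  assert (Hpow : (1 + / INR (S n)) ^ S n <= exp 1).
  { replace 1 with (INR (S n) * / INR (S n)) at 2 by (field; lra).
    rewrite <- exp_pow.
    apply pow_incr; split; [pose proof (Rinv_0_lt_compat _ Hr); lra | apply exp_ineq1_le]. }
  replace (INR (S n) + 1) with (INR (S n) * (1 + / INR (S n))) by (field; lra).
  rewrite Rpow_mult_distr.
  pose proof exp_le_3. pose proof (pow_lt _ (S n) Hr).
  nra.
Qed.

Lemma succ_pow_le_fact q : (INR q + 1) ^ q <= 3 ^ S q * INR (Factorial.fact q).
Proof.
  induction q as [|q IH]; [cbn; lra|].
  rewrite INR_fact_S, S_INR.
  pose proof (succ_pow_le_3_pow (S q)) as H3. rewrite S_INR in H3.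
  pose proof (pos_INR q).
  cbn [pow] in *. nra.
Qed.

Lemma pow_div_fact_ge c r q : 0 < c -> 0 < r <= INR q + 1 ->
  (c / 3) ^ q / 3 <= (c / r) ^ q * INR (Factorial.fact q).
Proof.
  intros Hc Hr. pose proof (pos_INR q).
  assert (HA : 0 < (INR q + 1) ^ q) by (apply pow_lt; lra).
  apply Rle_trans with ((c / (INR q + 1)) ^ q * INR (Factorial.fact q)).
  - replace (c / (INR q + 1)) with (c / 3 * (3 / (INR q + 1))) by (field; lra).
    rewrite Rpow_mult_distr, Rmult_assoc.
    apply Rmult_le_compat_l; [apply pow_le; lra|].
    unfold Rdiv; rewrite Rpow_mult_distr, pow_inv.
    apply Rmult_le_reg_r with (3 * (INR q + 1) ^ q); [lra|].
    replace (/ 3 * (3 * (INR q + 1) ^ q)) with ((INR q + 1) ^ q) by (field; lra).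
    replace (3 ^ q * / (INR q + 1) ^ q * INR (Factorial.fact q) * (3 * (INR q + 1) ^ q))
      with (3 ^ S q * INR (Factorial.fact q)) by (cbn [pow]; field; lra).
    apply succ_pow_le_fact.
  - apply Rmult_le_compat_r; [apply pos_INR|]. apply pow_incr; split.
    + apply Rmult_le_pos; [lra | left; apply Rinv_0_lt_compat; lra].
    + apply Rmult_le_compat_l; [lra|]. apply Rinv_le_contravar; lra.
Qed.

Lemma pow_ge_pow_min c q n : 0 <= c -> (q <= n <= S q)%nat -> c ^ q * Rmin 1 c <= c ^ n.
Proof.
  intros Hc Hn. pose proof (pow_le c q Hc).
  assert (0 <= Rmin 1 c) by (apply Rmin_glb; lra).
  assert (n = q \/ n = S q) as [-> | ->] by lia.
  - pose proof (Rmin_l 1 c). nra.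
  - cbn [pow]. pose proof (Rmin_r 1 c). nra.
Qed.

Lemma powerRZ_ge_min lo hi t e : 0 < lo -> lo <= t <= hi ->
  Rmin (powerRZ lo e) (powerRZ hi e) <= powerRZ t e.
Proof.
  intros Hlo Ht. destruct e as [|p|p]; cbn [powerRZ].
  - apply Rmin_l.
  - eapply Rle_trans; [apply Rmin_l|]. apply pow_incr; lra.
  - eapply Rle_trans; [apply Rmin_r|].
    apply Rinv_le_contravar; [apply pow_lt; lra | apply pow_incr; lra].
Qed.

Lemma div_between a n lo hi : 0 < n -> lo * n <= a <= hi * n -> lo <= a / n <= hi.
Proof.
  intros Hn Ha. assert (Hq : a / n * n = a) by (field; lra).
  split; nra.
Qed.

Lemma sqrt_ratio_le Q M c d P W k s : 0 <= Q <= M -> 0 < c -> 0 < k <= d * s ^ 2 ->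
  0 < W <= P -> 0 < s -> sqrt (Q / (c * d * P)) <= sqrt (M / (c * k * W)) * s.
Proof.
  intros HQ Hc Hk HW Hs.
  assert (Hd : 0 < d) by (destruct (Rle_or_lt d 0); [pose proof (pow2_ge_0 s); nra | lra]).
  assert (HcdP : 0 < c * d * P) by (apply Rmult_lt_0_compat; [nra | lra]).
  assert (HckW : 0 < c * k * W) by (apply Rmult_lt_0_compat; [nra | lra]).
  rewrite <- (sqrt_pow2 s), <- sqrt_mult_alt by
    (try apply Rmult_le_pos; try (left; apply Rinv_0_lt_compat); lra).
  apply sqrt_le_1_alt.
  apply Rle_trans with (M / (c * d * P)).
  { apply Rmult_le_compat_r; [left; apply Rinv_0_lt_compat|]; lra. }
  replace (M / (c * d * P)) with (M * s ^ 2 / (c * (d * s ^ 2) * P)) by (field; lra).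
  replace (M / (c * k * W) * s ^ 2) with (M * s ^ 2 / (c * k * W)) by (field; lra).
  apply Rmult_le_compat_l; [pose proof (pow2_ge_0 s); nra|].
  apply Rinv_le_contravar; [lra|].
  apply Rmult_le_compat; nra.
Qed.

Lemma Nat_div_add_sub_bounds d a n : (0 < d)%nat ->
  (n / d <= (n + a) / d - a / d <= S (n / d))%nat.
Proof.
  intros Hd.
  pose proof (Nat.div_mod a d ltac:(lia)). pose proof (Nat.mod_upper_bound a d ltac:(lia)).
  pose proof (Nat.div_mod n d ltac:(lia)). pose proof (Nat.mod_upper_bound n d ltac:(lia)).
  pose proof (Nat.div_mod (n + a) d ltac:(lia)).
  pose proof (Nat.mod_upper_bound (n + a) d ltac:(lia)).
  nia.
Qed.

Lemma Nat_div_lt_le_mul d a b k : (0 < d)%nat -> (a / d < k <= b / d)%nat -> (a < d * k <= b)%nat.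
Proof.
  intros Hd Hk.
  pose proof (Nat.div_mod a d ltac:(lia)). pose proof (Nat.mod_upper_bound a d ltac:(lia)).
  pose proof (Nat.div_mod b d ltac:(lia)). pose proof (Nat.mod_upper_bound b d ltac:(lia)).
  nia.
Qed.

(** * Cosine on the arcs [iπ/20, (i+1)π/20] *)

(* Upper bounds for cos (iπ/20), i = 0, ..., 19, rounded up to two decimals. *)
Definition cos_grid_ub (i : nat) : R :=
  IZR (nth i [100; 99; 96; 90; 81; 71; 59; 46; 31; 16; 1;
              -15; -30; -45; -58; -70; -80; -89; -95; -98]%Z 0%Z) / 100.

Lemma cos_le_cos_grid_ub i : (i <= 19)%nat -> cos (INR i * PI / 20) <= cos_grid_ub i.
Proof.
  intros Hi.
  assert (HiR : INR i <= 19) by (replace 19 with (INR 19) by (cbn; lra); apply le_INR; exact Hi).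
  pose proof (pos_INR i). pose proof PI_gt_314. pose proof PI_lt_32.
  (* Replace π by 3.14 and halve the angle, so that the Taylor bound on [-2, 2] applies. *)
  set (r := INR i * (314 / 100) / 40).
  assert (Hcr : 0 <= cos r) by (apply cos_ge_0; unfold r; nra).
  destruct (pre_cos_bound r 1) as [_ Hr]; [unfold r; nra|unfold r; nra|].
  change (2 * (1 + 1))%nat with 4%nat in Hr.
  apply Rle_trans with (2 * cos_approx r 4 ^ 2 - 1).
  - apply Rle_trans with (cos (2 * r)).
    + apply cos_decr_1; unfold r; nra.
    + rewrite cos_2a_cos; nra.
  - unfold r; rewrite cos_approx_4; clear - Hi.
    do 20 (destruct i as [|i]; [cbv [cos_grid_ub nth]; simpl INR; lra|]).
    lia.
Qed.

(* Arcs beyond π are reflected: cos v = cos (2π - v). *)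
Definition arc_cos_ub (i : nat) : R := cos_grid_ub (if (i <? 20)%nat then i else 39 - i).

(* On the first six arcs cos v >= 0 and |1 - ρ e^{iv}|^2 >= sin^2 v; on the others
   cos v <= 0.7 <= ρ and the minimum over ρ >= 0.7 is attained at ρ = 0.7. *)
Definition arc_lb (i : nat) : R :=
  let u := arc_cos_ub i in
  if (i <=? 5)%nat then 1 - u * u else 149 / 100 - 14 / 10 * u.

Lemma cos_le_arc_cos_ub i v : (i <= 31)%nat ->
  INR i * PI / 20 <= v <= INR (S i) * PI / 20 -> cos v <= arc_cos_ub i.
Proof.
  intros Hi Hv. rewrite S_INR in Hv. pose proof (pos_INR i). pose proof PI_gt_314.
  unfold arc_cos_ub. destruct (Nat.ltb_spec i 20) as [Hi20|Hi20].
  - assert (INR i <= 19) by (replace 19 with (INR 19) by (cbn; lra); apply le_INR; lia).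
    eapply Rle_trans; [|apply cos_le_cos_grid_ub; lia].
    apply cos_decr_1; nra.
  - assert (HiR : 20 <= INR i <= 31)
      by (split; [replace 20 with (INR 20) by (cbn; lra)|replace 31 with (INR 31) by (cbn; lra)];
          apply le_INR; lia).
    eapply Rle_trans; [|apply cos_le_cos_grid_ub; lia].
    rewrite minus_INR by lia.
    replace (cos v) with (cos (2 * PI - v)) by (rewrite cos_minus, cos_2PI, sin_2PI; ring).
    apply cos_decr_1; cbn [INR]; nra.
Qed.

Lemma arc_cos_ub_le i : (6 <= i <= 31)%nat -> arc_cos_ub i <= 7 / 10.
Proof.
  intros Hi.
  do 32 (destruct i as [|i];
    [first [lia | cbv [arc_cos_ub cos_grid_ub nth Nat.ltb Nat.leb Nat.sub]; lra]|]).
  lia.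
Qed.

Lemma arc_lb_ge i : (1 <= i <= 31)%nat -> 1 / 100 <= arc_lb i.
Proof.
  intros Hi.
  do 32 (destruct i as [|i];
    [first [lia | cbv [arc_lb arc_cos_ub cos_grid_ub nth Nat.ltb Nat.leb Nat.sub]; lra]|]).
  lia.
Qed.

Lemma arc_lb_le i a v : (1 <= i <= 31)%nat -> 7 / 10 <= exp a ->
  INR i * PI / 20 <= v <= INR (S i) * PI / 20 -> arc_lb i <= norm2_1_sub_exp a v.
Proof.
  intros Hi Ha Hv.
  pose proof (cos_le_arc_cos_ub i v ltac:(lia) Hv) as Hcos.
  unfold arc_lb. set (u := arc_cos_ub i) in *.
  destruct (Nat.leb_spec i 5) as [Hi5|Hi5].
  - assert (HiR : INR (S i) <= 6) by (replace 6 with (INR 6) by (cbn; lra); apply le_INR; lia).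
    pose proof PI_gt_314. pose proof (pos_INR i).
    assert (v <= 6 * PI / 20) by nra.
    assert (Hc0 : 0 <= cos v) by (apply cos_ge_0; nra).
    rewrite norm2_1_sub_exp_sin.
    pose proof (sin2_cos2 v) as Hsc; unfold Rsqr in Hsc.
    pose proof (pow2_ge_0 (exp a - cos v)). nra.
  - assert (Hu : u <= 7 / 10) by (apply arc_cos_ub_le; lia).
    unfold norm2_1_sub_exp.
    assert (0 <= (exp a - 7 / 10) * (exp a + 7 / 10 - 2 * u)) by (apply Rmult_le_pos; lra).
    assert (0 <= exp a * (u - cos v)) by (apply Rmult_le_pos; lra).
    nra.
Qed.

(** * The factors of the q-Pochhammer symbol *)

(* |1 - q^k|^2 for q = e^{(x + 8πi/5)/N} *)
Definition factor_norm2 (N : nat) (x : R) (k : nat) : R :=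
  norm2_1_sub_exp (INR k * (x / INR N)) (INR k * (8 * PI / 5 / INR N)).

Lemma factor_norm2_1 N x :
  factor_norm2 N x 1 = norm2_1_sub_exp (x / INR N) (8 * PI / 5 / INR N).
Proof. unfold factor_norm2; cbn [INR]; rewrite !Rmult_1_l; reflexivity. Qed.

Lemma factor_norm2_first_block N x k : (0 < N)%nat -> (32 * k <= N)%nat ->
  (5 / INR N * INR k) ^ 2 <= factor_norm2 N x k.
Proof.
  intros HN Hk.
  assert (HNR : 0 < INR N) by (apply lt_0_INR; exact HN).
  apply le_INR in Hk; rewrite mult_INR in Hk; replace (INR 32) with 32 in Hk by (cbn; lra).
  pose proof (pos_INR k).
  set (t := INR k / INR N).
  assert (Ht : 0 <= t <= 1 / 32) by (apply div_between; lra).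
  pose proof (sin_small_arc_ge t Ht) as Hsin.
  unfold factor_norm2; rewrite norm2_1_sub_exp_sin.
  replace (INR k * (8 * PI / 5 / INR N)) with (8 * PI / 5 * t) by (unfold t; field; lra).
  replace (5 / INR N * INR k) with (5 * t) by (unfold t; field; lra).
  pose proof (pow2_ge_0 (exp (INR k * (x / INR N)) - cos (8 * PI / 5 * t))).
  nra.
Qed.

Lemma factor_norm2_arc N x i k : (0 < N)%nat -> (1 <= i <= 31)%nat -> (k <= N)%nat ->
  - PI / 10 <= x -> (i * N <= 32 * k <= S i * N)%nat -> arc_lb i <= factor_norm2 N x k.
Proof.
  intros HN Hi HkN Hx [Hk1 Hk2].
  assert (HNR : 0 < INR N) by (apply lt_0_INR; exact HN).
  apply le_INR in HkN, Hk1, Hk2; rewrite !mult_INR in Hk1, Hk2.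
  replace (INR 32) with 32 in Hk1, Hk2 by (cbn; lra).
  pose proof (pos_INR k). pose proof PI_gt_314. pose proof PI_lt_32.
  apply arc_lb_le; [exact Hi| |].
  - assert (Ht : 0 <= INR k / INR N <= 1) by (apply div_between; lra).
    apply exp_ge_7_10.
    replace (INR k * (x / INR N)) with (INR k / INR N * x) by (field; lra).
    set (t := INR k / INR N) in *; clearbody t.
    assert (0 <= t * (x + PI / 10)) by (apply Rmult_le_pos; lra).
    assert (0 <= (1 - t) * PI) by (apply Rmult_le_pos; lra).
    lra.
  - assert (Ht : INR i <= 32 * INR k / INR N <= INR (S i)) by (apply div_between; lra).
    replace (INR k * (8 * PI / 5 / INR N)) with (PI / 20 * (32 * INR k / INR N)) by (field; lra).
    set (t := 32 * INR k / INR N) in *; clearbody t.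
    nra.
Qed.

Lemma rprod_first_block N x : (0 < N)%nat ->
  ((5 / 96) ^ 2) ^ (N / 32) / 9 <= rprod (factor_norm2 N x) (N / 32).
Proof.
  intros HN. set (q := (N / 32)%nat).
  assert (HqN : (32 * q <= N <= 32 * (q + 1))%nat).
  { pose proof (Nat.div_mod N 32 ltac:(lia)). pose proof (Nat.mod_upper_bound N 32 ltac:(lia)).
    unfold q; lia. }
  assert (HNR : 0 < INR N) by (apply lt_0_INR; exact HN).
  assert (HNq : INR N <= 32 * (INR q + 1)).
  { replace 32 with (INR 32) by (cbn; lra). rewrite <- S_INR, <- mult_INR.
    apply le_INR; lia. }
  apply Rle_trans with (rprod (fun k => (5 / INR N * INR k) ^ 2) q).
  2: { apply rprod_le; intros k Hk; split; [apply pow2_ge_0|].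
       apply factor_norm2_first_block; lia. }
  rewrite (rprod_pow (fun k => 5 / INR N * INR k)), (rprod_mul (fun _ => 5 / INR N) INR),
    rprod_const, rprod_INR_fact.
  pose proof (pow_div_fact_ge (5 / 32) (INR N / 32) q ltac:(lra) ltac:(split; lra))
    as Hfact.
  replace (5 / 32 / 3) with (5 / 96) in Hfact by field.
  replace (5 / 32 / (INR N / 32)) with (5 / INR N) in Hfact by (field; lra).
  rewrite <- pow_mult, Nat.mul_comm, pow_mult.
  replace (((5 / 96) ^ q) ^ 2 / 9) with (((5 / 96) ^ q / 3) ^ 2) by field.
  apply pow_incr; split; [|exact Hfact].
  apply Rmult_le_pos; [apply pow_le | ]; lra.
Qed.

(* Block j (1 <= j <= 32) consists of the k with (j - 1) N < 32 k <= j N; its product is at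
   least block_base j ^ (N / 32) * block_slack j. *)
Definition block_base (j : nat) : R := if (j =? 1)%nat then (5 / 96) ^ 2 else arc_lb (pred j).
Definition block_slack (j : nat) : R := if (j =? 1)%nat then / 9 else Rmin 1 (arc_lb (pred j)).

Lemma rprod_block_base_ge1 : 1 <= rprod block_base 32.
Proof.
  cbv [rprod block_base arc_lb arc_cos_ub cos_grid_ub nth Nat.eqb Nat.ltb Nat.leb pred Nat.sub].
  lra.
Qed.

Lemma rprod_block_slack_gt0 : 0 < rprod block_slack 32.
Proof.
  apply rprod_gt0; intros j Hj. unfold block_slack.
  destruct (Nat.eqb_spec j 1); [lra|].
  apply Rmin_glb_lt; [lra|]. pose proof (arc_lb_ge (pred j) ltac:(lia)); lra.
Qed.

Lemma rprod_arc_block N x j : (0 < N)%nat -> (1 <= j <= 31)%nat -> - PI / 10 <= x ->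
  arc_lb j ^ (N / 32) * Rmin 1 (arc_lb j)
    <= rprod (fun i => factor_norm2 N x (j * N / 32 + i)) (S j * N / 32 - j * N / 32).
Proof.
  intros HN Hj Hx.
  pose proof (arc_lb_ge j Hj) as Hc.
  pose proof (Nat_div_add_sub_bounds 32 (j * N) N ltac:(lia)) as Hn.
  change (N + j * N)%nat with (S j * N)%nat in Hn.
  eapply Rle_trans; [apply pow_ge_pow_min; [lra | exact Hn]|].
  rewrite <- rprod_const. apply rprod_le; intros i Hi; split; [lra|].
  assert (Hk := Nat_div_lt_le_mul 32 (j * N) (S j * N) (j * N / 32 + i) ltac:(lia) ltac:(lia)).
  assert (HkN : (S j * N / 32 <= N)%nat) by (apply Nat.Div0.div_le_upper_bound; nia).
  apply factor_norm2_arc; [lia | lia | lia | exact Hx | lia].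
Qed.

Lemma rprod_factor_norm2_ge N x : (0 < N)%nat -> - PI / 10 <= x ->
  rprod block_slack 32 <= rprod (factor_norm2 N x) N.
Proof.
  intros HN Hx. set (q := (N / 32)%nat).
  replace N with (32 * N / 32)%nat at 2 by (rewrite Nat.mul_comm, Nat.div_mul; lia).
  apply Rle_trans with (rprod (fun j => block_base j ^ q * block_slack j) 32).
  { rewrite (rprod_mul (fun j => block_base j ^ q)), rprod_pow.
    pose proof (pow_R1_Rle _ q rprod_block_base_ge1). pose proof rprod_block_slack_gt0. nra. }
  apply (rprod_blocks _ _ (fun j => j * N / 32)%nat); [reflexivity | |].
  { intros j. apply Nat.Div0.div_le_mono. nia. }
  intros j Hj. cbv beta.
  destruct (Nat.eq_dec j 0) as [->|Hj0].
  - cbn [block_base block_slack Nat.eqb].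
    replace (1 * N / 32 - 0 * N / 32)%nat with q
      by (cbn; rewrite Nat.add_0_r, Nat.sub_0_r; reflexivity).
    split; [apply Rmult_le_pos; [apply pow_le|]; lra|].
    apply rprod_first_block; exact HN.
  - unfold block_base, block_slack.
    destruct (Nat.eqb_spec (S j) 1) as [|_]; [lia|]. cbn [pred].
    pose proof (arc_lb_ge j ltac:(lia)).
    split; [apply Rmult_le_pos; [apply pow_le | apply Rmin_glb]; lra|].
    apply rprod_arc_block; [exact HN | lia | exact Hx].
Qed.

(** * The factor 1 - q *)

Lemma factor_norm2_1_ge N x : (0 < N)%nat -> - PI / 10 <= x ->
  1 / 100 <= factor_norm2 N x 1 * INR N ^ 2.
Proof.
  intros HN Hx.
  assert (HNR : 1 <= INR N) by (replace 1 with (INR 1) by reflexivity; apply le_INR; lia).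
  assert (HN2 : 1 <= INR N ^ 2) by (cbn; nra).
  pose proof (norm2_1_sub_exp_ge0 (INR 1 * (x / INR N)) (INR 1 * (8 * PI / 5 / INR N))).
  destruct (le_lt_dec 32 N) as [H32|H32].
  - pose proof (factor_norm2_first_block N x 1 HN ltac:(lia)) as H1.
    replace ((5 / INR N * INR 1) ^ 2) with (25 / INR N ^ 2) in H1 by (cbn; field; lra).
    apply Rmult_le_compat_r with (r := INR N ^ 2) in H1; [|lra].
    replace (25 / INR N ^ 2 * INR N ^ 2) with 25 in H1 by (field; lra).
    lra.
  - (* the angle 8π/(5N) lies on the arc number ⌊31/N⌋ *)
    assert (Hi : (1 <= 31 / N <= 31 /\ 31 / N * N <= 32 * 1 <= S (31 / N) * N)%nat).
    { pose proof (Nat.div_mod 31 N ltac:(lia)). pose proof (Nat.mod_upper_bound 31 N ltac:(lia)).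
      nia. }
    pose proof (factor_norm2_arc N x (31 / N) 1 HN (proj1 Hi) ltac:(lia) Hx (proj2 Hi)).
    pose proof (arc_lb_ge (31 / N) (proj1 Hi)).
    unfold factor_norm2 in *. nra.
Qed.

Lemma factor_norm2_1_le N x : (0 < N)%nat -> - (2 * PI) <= x <= 2 * PI ->
  factor_norm2 N x 1 * INR N ^ 2
    <= exp (2 * PI) ^ 2 * (2 * PI) ^ 2 + exp (2 * PI) * (8 * PI / 5) ^ 2.
Proof.
  intros HN Hx.
  assert (HNR : 1 <= INR N) by (replace 1 with (INR 1) by reflexivity; apply le_INR; lia).
  pose proof PI_gt_314.
  assert (Ha : - (2 * PI) <= x / INR N <= 2 * PI) by (apply div_between; nra).
  rewrite factor_norm2_1.
  pose proof (norm2_1_sub_exp_le (x / INR N) (8 * PI / 5 / INR N) (2 * PI) (proj2 Ha) ltac:(lra))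
    as Hle.
  assert (HN2 : 0 < INR N ^ 2) by (apply pow_lt; lra).
  apply Rmult_le_compat_r with (r := INR N ^ 2) in Hle; [|lra].
  replace ((exp (2 * PI) ^ 2 * (x / INR N) ^ 2 + exp (2 * PI) * (8 * PI / 5 / INR N) ^ 2)
    * INR N ^ 2) with (exp (2 * PI) ^ 2 * x ^ 2 + exp (2 * PI) * (8 * PI / 5) ^ 2) in Hle
    by (field; lra).
  assert (Hx2 : x ^ 2 <= (2 * PI) ^ 2) by nra.
  pose proof (pow2_ge_0 (exp (2 * PI))).
  nra.
Qed.

Theorem corollary3p3 : forall m : Z, exists K : R,
  forall (N : nat), (1 <= N)%nat ->
  forall x y : R, - PI / 10 <= x <= 2 * PI -> y = 8 * PI / 5 ->
  Cnorm (corF m N (x, y)) <= K * powerRZ (INR N) (m + 1).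
Proof.
  intros m.
  set (B := exp (2 * PI) ^ 2 * (2 * PI) ^ 2 + exp (2 * PI) * (8 * PI / 5) ^ 2).
  set (kappa := Rmin (powerRZ (1 / 100) (m + 1)) (powerRZ B (m + 1))).
  exists (sqrt (exp (2 * PI) ^ 2 / (4 * PI ^ 2 * kappa * rprod block_slack 32))).
  intros N HN x y Hx ->.
  assert (HNR : 1 <= INR N) by (replace 1 with (INR 1) by reflexivity; apply le_INR; exact HN).
  pose proof PI_gt_314.
  unfold corF, Cnorm. rewrite Cdiv_RtoC by lra.
  rewrite Cnorm2_Cdiv, !Cnorm2_Cmul, Cnorm2_CpowZ, Cnorm2_Csub_sym, Cnorm2_1_sub_Cexp,
    Cnorm2_Cexp, Cnorm2_qpoch_Cexp, <- factor_norm2_1.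
  replace (Cnorm2 (RtoC (2 * PI)) * Cnorm2 Ci) with (4 * PI ^ 2)
    by (unfold Cnorm2, RtoC, Ci; cbn; ring).
  assert (Ha : - (2 * PI) <= x / INR N <= 2 * PI) by (apply div_between; nra).
  apply sqrt_ratio_le.
  - split; [apply pow2_ge_0|].
    apply pow_incr; split; [left; apply exp_pos | apply exp_le_compat; lra].
  - nra.
  - assert (HB : 0 < B).
    { unfold B. pose proof (exp_pos (2 * PI)). pose proof (pow_lt (8 * PI / 5) 2 ltac:(lra)).
      pose proof (pow2_ge_0 (exp (2 * PI))). pose proof (pow2_ge_0 (2 * PI)). nra. }
    split; [apply Rmin_glb_lt; apply powerRZ_lt; lra|].
    replace (powerRZ (INR N) (m + 1) ^ 2) with (powerRZ (INR N ^ 2) (m + 1))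
      by (cbn [pow]; rewrite !Rmult_1_r, powerRZ_mult; reflexivity).
    rewrite <- powerRZ_mult.
    apply powerRZ_ge_min; [lra | split].
    + apply factor_norm2_1_ge; [lia | apply Hx].
    + apply factor_norm2_1_le; [lia | lra].
  - split; [apply rprod_block_slack_gt0 | apply rprod_factor_norm2_ge; [lia | apply Hx]].
  - apply powerRZ_lt; lra.
Qed.
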